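(* Let $\mathbf{T}\subset\mathbb{S}^3$ be a spherical tetrahedron with Gram matrix $G=\{g_{ij}\}_{i,j=0}^3$ and edge matrix $G^\star=\{g^\star_{ij}\}_{i,j=0}^3$, and let $c_{ij}$, $c^\star_{ij}$ be the $(i,j)$-cofactors of $G$ and $G^\star$ respectively. Then for all $i,j=0,1,2,3$: $$g_{ij}\,c^\star_{ij}\ge 0\qquad\text{and}\qquad g^\star_{ij}\,c_{ij}\ge 0.$$
   Context: A spherical tetrahedron $\mathbf{T}\subset\mathbb{S}^3\subset\mathbb{R}^4$ is the intersection of $\mathbb{S}^3$ with the cone $\{\sum\lambda_i\mathrm{p}_i:\lambda_i\ge0\}$ over four linearly independent unit vectors $\mathrm{p}_0,\dots,\mathrm{p}_3$. Its edge matrix is $G^\star=(\langle\mathrm{p}_i,\mathrm{p}_j\rangle)_{i,j=0}^3$, and its Gram matrix is $G=(\langle\mathrm{v}_i,\mathrm{v}_j\rangle)_{i,j=0}^3$, where $\mathrm{v}_i$ is the outer unit normal to the face opposite $\mathrm{p}_i$. The $(i,j)$-cofactor of a matrix is $(-1)^{i+j}$ times the determinant of the matrix with row $i$ and column $j$ deleted. *)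

From HB Require Import structures.
From mathcomp Require Import all_boot all_order all_algebra.
Set Implicit Arguments. Unset Strict Implicit. Unset Printing Implicit Defensive.
Import Order.TTheory GRing.Theory Num.Theory.
Local Open Scope ring_scope.

(* Vectors of R^4 are row vectors 'rV[R]_4; a family of four vectors
   indexed by 'I_4 is stored as the rows of a 4x4 matrix. *)

Definition dotv {R : realFieldType} (u w : 'rV[R]_4) : R := (u *m w^T) 0 0.

Definition gram_of {R : realFieldType} (A : 'M[R]_4) : 'M[R]_4 :=
  \matrix_(i, j) dotv (row i A) (row j A).

Definition tetra_vertices {R : realFieldType} (P : 'M[R]_4) : Prop :=
  row_free P /\ forall i : 'I_4, dotv (row i P) (row i P) = 1.

(* Row i of V is the outer unit normal v_i to the face opposite p_i:
   a unit vector orthogonal to p_j (j <> i), pointing away from p_i. *)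
Definition outer_unit_normals {R : realFieldType} (P V : 'M[R]_4) : Prop :=
  forall i : 'I_4,
    [/\ dotv (row i V) (row i V) = 1,
        dotv (row i V) (row i P) < 0 &
        forall j : 'I_4, j != i -> dotv (row i V) (row j P) = 0].

Definition edge_matrix {R : realFieldType} (P : 'M[R]_4) := gram_of P.
Definition gram_matrix {R : realFieldType} (V : 'M[R]_4) := gram_of V.

From HB Require Import structures.
From mathcomp Require Import all_boot all_order all_algebra.
From mathcomp Require Import ring.
Set Implicit Arguments.
Unset Strict Implicit.
Unset Printing Implicit Defensive.
Import Order.TTheory GRing.Theory Num.Theory.
Local Open Scope ring_scope.

(* Writing D for the diagonal matrix of the numbers <v_i, p_i> < 0, the
   normals satisfy V P^T = D, hence V = D P^-T and G = D (G* )^-1 D; the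
   relation is symmetric, G* = D G^-1 D.  A cofactor of a symmetric matrix A
   is det A times the same entry of A^-1, so for B = D A^-1 D we get
   b_ij c_ij = d_i d_j det A ((A^-1)_ij)^2 >= 0, because the d_i have a
   common sign and Gram matrices of bases have positive determinant. *)

Lemma dotv_rowE (R : realFieldType) (A B : 'M[R]_4) i j :
  dotv (row i A) (row j B) = (A *m B^T) i j.
Proof. by rewrite /dotv !mxE; apply: eq_bigr => k _; rewrite !mxE. Qed.

Lemma gram_ofE (R : realFieldType) (A : 'M[R]_4) : gram_of A = A *m A^T.
Proof. by apply/matrixP => i j; rewrite mxE dotv_rowE. Qed.

Section InverseCongruence.

Variables (R : fieldType) (n : nat).
Implicit Types (A B : 'M[R]_n) (d : 'rV[R]_n).

Lemma trmx_mul_tr A : (A *m A^T)^T = A *m A^T.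
Proof. by rewrite trmx_mul trmxK. Qed.

Lemma invmx_eq A B : A *m B = 1%:M -> invmx A = B.
Proof.
move=> AB1; have [Au _] := mulmx1_unit AB1.
by rewrite -[invmx A]mulmx1 -AB1 mulKmx.
Qed.

Lemma cofactor_unitmx A i j :
  A \in unitmx -> cofactor A i j = \det A * invmx A j i.
Proof.
move=> Au; have := Au; rewrite unitmxE unitfE => detA_neq0.
by rewrite /invmx Au !mxE mulrA mulrV ?unitfE // mul1r.
Qed.

Lemma diag_mx_unit d : (forall k, d 0 k != 0) -> diag_mx d \in unitmx.
Proof.
by move=> d_neq0; rewrite unitmxE det_diag unitfE; apply/prodf_neq0 => k _.
Qed.

Lemma diag_congr_invmxK d A :
  (forall k, d 0 k != 0) -> A \in unitmx ->
  diag_mx d *m invmx (diag_mx d *m invmx A *m diag_mx d) *m diag_mx d = A.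
Proof.
move=> d_neq0 Au; set D := diag_mx d.
have Du : D \in unitmx by exact: diag_mx_unit.
have -> : invmx (D *m invmx A *m D) = invmx D *m A *m invmx D.
  by apply: invmx_eq; rewrite !mulmxA (mulmxK Du) (mulmxKV Au) mulmxV.
by rewrite !mulmxA mulmxV // mul1mx mulmxKV.
Qed.

Lemma gram_of_dual_basis d (P V : 'M[R]_n) :
  P \in unitmx -> V *m P^T = diag_mx d ->
  V *m V^T = diag_mx d *m invmx (P *m P^T) *m diag_mx d.
Proof.
move=> Pu VPT; have PTu : P^T \in unitmx by rewrite unitmx_tr.
have -> : V = diag_mx d *m invmx P^T by rewrite -VPT mulmxK.
have -> : invmx (P *m P^T) = invmx P^T *m invmx P.
  by apply: invmx_eq; rewrite !mulmxA mulmxK // mulmxV.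
by rewrite trmx_mul tr_diag_mx trmx_inv trmxK !mulmxA.
Qed.

End InverseCongruence.

Section CofactorSign.

Variables (R : realFieldType) (n : nat).
Implicit Types (A : 'M[R]_n) (d : 'rV[R]_n).

Lemma det_mul_tr_gt0 A : A \in unitmx -> 0 < \det (A *m A^T).
Proof.
rewrite unitmxE unitfE det_mulmx det_tr => detA_neq0.
by rewrite -expr2 exprn_even_gt0.
Qed.

Lemma diag_congr_inv_cofactor_ge0 d A i j :
  A^T = A -> 0 < \det A -> 0 < d 0 i * d 0 j ->
  0 <= (diag_mx d *m invmx A *m diag_mx d) i j * cofactor A i j.
Proof.
move=> A_sym detA_gt0 dij_gt0.
have Au : A \in unitmx by rewrite unitmxE unitfE lt0r_neq0.
have invA_sym : invmx A j i = invmx A i j.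
  by rewrite -[in LHS]A_sym -trmx_inv mxE.
rewrite cofactor_unitmx // invA_sym mul_mx_diag mxE mul_diag_mx mxE.
have -> : d 0 i * invmx A i j * d 0 j * (\det A * invmx A i j)
          = d 0 i * d 0 j * \det A * invmx A i j ^+ 2 by ring.
by rewrite mulr_ge0 ?sqr_ge0 // mulr_ge0 ?ltW.
Qed.

End CofactorSign.

Lemma outer_unit_normals_mul_tr (R : realFieldType) (P V : 'M[R]_4) :
  outer_unit_normals P V ->
  V *m P^T = diag_mx (\row_k dotv (row k V) (row k P)).
Proof.
move=> normals; apply/matrixP => a b; rewrite -dotv_rowE !mxE.
have [->|a_neq_b] := eqVneq a b; first by rewrite mulr1n.
by have [_ _ ->] := normals a; rewrite 1?eq_sym // mulr0n.
Qed.

Theorem proposition3 (R : realFieldType) (P V : 'M[R]_4) :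
  tetra_vertices P -> outer_unit_normals P V ->
  forall i j : 'I_4,
    0 <= gram_matrix V i j * cofactor (edge_matrix P) i j /\
    0 <= edge_matrix P i j * cofactor (gram_matrix V) i j.
Proof.
move=> [P_free _] normals i j.
rewrite /gram_matrix /edge_matrix !gram_ofE.
have Pu : P \in unitmx by rewrite -row_free_unit.
have VPT := outer_unit_normals_mul_tr normals.
set d := \row_k _ in VPT.
have d_lt0 k : d 0 k < 0 by rewrite mxE; case: (normals k).
have d_neq0 k : d 0 k != 0 by rewrite ltr0_neq0.
have dij_gt0 : 0 < d 0 i * d 0 j by rewrite nmulr_rgt0.
have G_eq := gram_of_dual_basis Pu VPT.
have Vu : V \in unitmx.
  by have := diag_mx_unit d_neq0; rewrite -VPT unitmx_mul => /andP[].
split.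
  by rewrite G_eq diag_congr_inv_cofactor_ge0 ?det_mul_tr_gt0 ?trmx_mul_tr.
have Gs_eq : P *m P^T = diag_mx d *m invmx (V *m V^T) *m diag_mx d.
  by rewrite G_eq diag_congr_invmxK // unitmxE unitfE lt0r_neq0 ?det_mul_tr_gt0.
by rewrite Gs_eq diag_congr_inv_cofactor_ge0 ?det_mul_tr_gt0 ?trmx_mul_tr.
Qed.
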